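(* Let $\boldsymbol V$ be a generically irreducible $(\boldsymbol{\mathfrak g}_d,K)$-module for $SL(2,\mathbb R)$ with $H_{D_d}(\boldsymbol V)\neq0$. Then $\boldsymbol V$ has an infinitesimal character $\boldsymbol\lambda\in\mathrm{Hom}_{\mathbb C[t]}(\boldsymbol{\mathfrak k},\mathbb C[t])$ with respect to the fundamental Cartan subfamily $\boldsymbol{\mathfrak k}$. Moreover, for any $\mu\in\mathfrak k^*$ such that the $\mu$-weight space of $H_{D_d}(\boldsymbol V)$ is non-zero, $1\otimes\mu$ is an infinitesimal character of $\boldsymbol V$, and every infinitesimal character $\boldsymbol\lambda$ of $\boldsymbol V$ with respect to $\boldsymbol{\mathfrak k}$ equals $1\otimes w\cdot\mu\in\mathbb C[t]\otimes_{\mathbb C}\mathfrak k^*$ for some $w\in W(\mathfrak g,\mathfrak k)=\{1,w_0\}$, where $w_0$ acts on $\mathfrak k^*$ by $-1$.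
   Context: Notation as for $SL(2,\mathbb R)$: $\mathfrak g=\mathfrak{sl}(2,\mathbb C)$ with triple $x,y,h$, $\mathfrak k=\mathbb Ch$, $\mathfrak p=\mathbb Cx\oplus\mathbb Cy$; $\tilde x=t\otimes x$, $\tilde y=t\otimes y$, $\tilde h=1\otimes h$; $\boldsymbol{\mathfrak g}_d=\mathbb C[t]\tilde h\oplus\mathbb C[t]\tilde x\oplus\mathbb C[t]\tilde y$, $\boldsymbol{\mathfrak k}=\mathbb C[t]\tilde h$, with $[\tilde x,\tilde y]=t^2\tilde h$. Spin module $\boldsymbol S_d=\mathbb C[t]1\oplus\mathbb C[t]\tilde y$ (with $\tilde x\cdot\tilde y=4$, $\tilde x\cdot1=0$, $\tilde y\cdot1=\tilde y$, $\tilde y\cdot\tilde y=0$, $\tilde h$ acting with weights $1,-1$), Dirac operator $D_d=\frac14(\tilde x\otimes\gamma_d(\tilde y)+\tilde y\otimes\gamma_d(\tilde x))$ on $\boldsymbol V\otimes_{\mathbb C[t]}\boldsymbol S_d$, $H_{D_d}(\boldsymbol V)=\ker D_d/(\ker D_d\cap\mathrm{im}D_d)$ with its $\tilde h$-weight decomposition (weights identified with $\mu\in\mathfrak k^*$ via $\mu(h)$). $\mathcal Z(\boldsymbol{\mathfrak g}_d)=\mathbb C[t][\Omega_d]$ with $\Omega_d=\frac18t^2\tilde h^2+\frac14\tilde x\tilde y+\frac14\tilde y\tilde x$, and its Harish-Chandra image is $\frac{t^2}{8}(\tilde h^2-1)$. A generically irreducible module (all but countably many fibers irreducible) is quasi-simple,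 $\Omega_d$ acting by some $\omega_{\boldsymbol V}(t)\in\mathbb C[t]$; $\boldsymbol\lambda\in\boldsymbol{\mathfrak k}^*$ is an infinitesimal character w.r.t. $\boldsymbol{\mathfrak k}$ iff $\omega_{\boldsymbol V}(t)=\frac{t^2}{8}(\boldsymbol\lambda(\tilde h)^2-1)$. *)

From HB Require Import structures.
From mathcomp Require Import all_boot all_order all_algebra.
From mathcomp Require Import reals complex.
Set Implicit Arguments.
Unset Strict Implicit.
Unset Printing Implicit Defensive.
Import Order.TTheory GRing.Theory Num.Theory.
Local Open Scope ring_scope.

(* A (g_d,K)-module for
   SL(2,R) is a C[t]-module V (V : lmodType {poly C}) with C[t]-linear
   operators X = x~ = t(x)x, Y = y~ = t(x)y, H = h~ = 1(x)h (given as
   {linear V -> V}), and an algebraic action of K = SO(2), encoded by its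
   weight (isotypic) decomposition: every vector is a finite sum of vectors on
   which h~ acts by an integer (differential of the K-action = action of k). *)

Definition gdK_module (C : fieldType) (V : lmodType {poly C}) (X Y H : V -> V)
  : Prop :=
  [/\ (forall v, H (X v) - X (H v) = X v *+ 2),
      (forall v, H (Y v) - Y (H v) = - (Y v *+ 2)),
      (forall v, X (Y v) - Y (X v) = 'X^2 *: H v) &
      (forall v, exists s : seq (int * V),
          v = \sum_(p <- s) p.2 /\
          (forall p, p \in s -> H p.2 = (p.1)%:~R *: p.2))].

(* no C[t]-torsion (flat family) *)
Definition torsion_free (C : fieldType) (V : lmodType {poly C}) : Prop :=
  forall (p : {poly C}) (v : V), p *: v = 0 -> p = 0 \/ v = 0.

Definition admissible (C : fieldType) (V : lmodType {poly C}) (H : V -> V)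
  : Prop :=
  forall n : int, exists s : seq V,
    (forall u, u \in s -> H u = n%:~R *: u) /\
    (forall v, H v = n%:~R *: v ->
       exists c : seq {poly C}, v = \sum_(i < size s) c`_i *: s`_i).

(* the submodule (t - z) V, kernel of V -> V|_z = V / (t - z) V *)
Definition tzV (C : fieldType) (V : lmodType {poly C}) (z : C) (w : V) : Prop :=
  exists v, w = ('X - z%:P) *: v.

(* the fiber V|_z = V/(t-z)V is an irreducible (g_z,K)-module: it is non-zero
   and every (g,K)-submodule is 0 or everything; submodules of the fiber are
   described by their preimages W in V (submodules containing (t-z)V). *)
Definition fiber_irreducible (C : fieldType) (V : lmodType {poly C})
  (X Y H : V -> V) (z : C) : Prop :=
  (exists v : V, ~ tzV z v) /\
  forall W : V -> Prop,
    W 0 ->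
    (forall u v, W u -> W v -> W (u + v)) ->
    (forall (p : {poly C}) v, W v -> W (p *: v)) ->
    (forall v, tzV z v -> W v) ->
    (forall v, W v -> [/\ W (X v), W (Y v) & W (H v)]) ->
    (* K-stability: W contains the K-isotypic components of its elements *)
    (forall s : seq (int * V), uniq (map fst s) ->
        (forall p, p \in s -> H p.2 = (p.1)%:~R *: p.2) ->
        W (\sum_(p <- s) p.2) -> forall p, p \in s -> W p.2) ->
    (forall v, W v -> tzV z v) \/ (forall v, W v).

Definition generically_irreducible (C : fieldType) (V : lmodType {poly C})
  (X Y H : V -> V) : Prop :=
  exists f : nat -> C, forall z, ~ fiber_irreducible X Y H z -> exists n, f n = z.

(* V (x)_{C[t]} S_d = V (x) 1  +  V (x) y~, identified with V * V:
   the pair (v, w) stands for v (x) 1 + w (x) y~.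
   D_d = 1/4 (x~ (x) g(y~) + y~ (x) g(x~)) with
   y~.1 = y~, y~.y~ = 0, x~.1 = 0, x~.y~ = 4, hence
   D_d (v, w) = (y~ w, 1/4 x~ v). *)
Definition Dirac (C : fieldType) (V : lmodType {poly C}) (X Y : V -> V)
  (a : V * V) : V * V :=
  (Y a.2, (4^-1 : C)%:P *: X a.1).

(* diagonal action of h~ on V (x) S_d (weights 1, -1 on 1, y~) *)
Definition Hspin (C : fieldType) (V : lmodType {poly C}) (H : V -> V)
  (a : V * V) : V * V :=
  (H a.1 + a.1, H a.2 - a.2).

Definition in_ker_D (C : fieldType) (V : lmodType {poly C}) (X Y : V -> V)
  (a : V * V) : Prop := Dirac X Y a = 0.

Definition in_im_D (C : fieldType) (V : lmodType {poly C}) (X Y : V -> V)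
  (a : V * V) : Prop := exists b, a = Dirac X Y b.

(* H_D(V) = ker D / (ker D /\ im D) is non-zero *)
Definition HD_nonzero (C : fieldType) (V : lmodType {poly C}) (X Y : V -> V)
  : Prop :=
  exists a, in_ker_D X Y a /\ ~ in_im_D X Y a.

(* the mu-weight space (mu in k^*, identified with mu(h) in C) of H_D(V) is
   non-zero: some class [a], a in ker D, a not in ker D /\ im D, with
   h~ [a] = mu [a], i.e. h~ a - mu a in ker D /\ im D. *)
Definition HD_weight_nonzero (C : fieldType) (V : lmodType {poly C})
  (X Y H : V -> V) (mu : C) : Prop :=
  exists a, [/\ in_ker_D X Y a,
                in_ker_D X Y (Hspin H a - mu%:P *: a),
                in_im_D X Y (Hspin H a - mu%:P *: a) &
                ~ in_im_D X Y a].

Definition Omega_d (C : fieldType) (V : lmodType {poly C}) (X Y H : V -> V)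
  (v : V) : V :=
  ((8^-1 : C)%:P * 'X^2) *: H (H v) + (4^-1 : C)%:P *: (X (Y v) + Y (X v)).

(* lambda in Hom_{C[t]}(k, C[t]) is determined by lam = lambda(h~) in C[t];
   V has infinitesimal character lambda iff the centre C[t][Omega_d] acts
   through the Harish-Chandra image, i.e. Omega_d acts by t^2/8 (lam^2 - 1). *)
Definition has_infchar (C : fieldType) (V : lmodType {poly C}) (X Y H : V -> V)
  (lam : {poly C}) : Prop :=
  forall v, Omega_d X Y H v = ((8^-1 : C)%:P * 'X^2 * (lam ^+ 2 - 1)) *: v.

(* A class in [H_D(V)] yields a nonzero [h~]-weight vector [w], of weight [k],
   killed by [x~] (or [y~]); there [Omega_d] acts by [t^2/8 (lam0^2 - 1)] with
   [lam0 = k + 1] (or [k - 1]), and [lam0 = mu] when the class has weight [mu].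
   [Omega_d] commutes with [g_d], so it acts by a scalar on each irreducible
   fiber [V|_z]: for every [v], either [w] or [Omega_d v - p v] lies in
   [(t - z)V]. Admissibility and torsion-freeness allow a nonzero weight vector
   in [(t - z)V] for only finitely many [z], and only countably many fibers are
   reducible, so uncountably many [z] force [Omega_d v = p v]. Comparing
   [t^2/8 (lam^2 - 1)] with [t^2/8 (lam0^2 - 1)] gives [lam = lam0] or [- lam0]. *)

From HB Require Import structures.
From mathcomp Require Import all_boot all_order all_algebra.
From mathcomp Require Import reals complex ring boolp.
From mathcomp Require Import classical_sets cardinality ereal measure lebesgue_measure.
Import Order.TTheory GRing.Theory Num.Theory.
Local Open Scope classical_set_scope.
Local Open Scope ring_scope.
Set Implicit Arguments.
Unset Strict Implicit.

Section Weights.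
Variables (C : numFieldType) (V : lmodType {poly C}) (H : {linear V -> V}).

Definition weight_vec (k : int) (v : V) := H v = k%:~R *: v.

Definition weight_seq (s : seq (int * V)) :=
  forall p, p \in s -> H p.2 = (p.1)%:~R *: p.2.

Definition weight_decomposable :=
  forall v, exists s, v = \sum_(p <- s) p.2 /\ weight_seq s.

Definition shifts_weights (F : V -> V) (d : int) :=
  forall j x, weight_vec j x -> weight_vec (j + d) (F x).

Definition weight_comp (s : seq (int * V)) (k : int) : V :=
  \sum_(p <- s | p.1 == k) p.2.

Lemma weight_vecD k u v : weight_vec k u -> weight_vec k v -> weight_vec k (u + v).
Proof. by rewrite /weight_vec linearD scalerDr => -> ->. Qed.

Lemma weight_vecZ k (c : {poly C}) v : weight_vec k v -> weight_vec k (c *: v).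
Proof. by rewrite /weight_vec linearZ_LR => ->; rewrite !scalerA mulrC. Qed.

Lemma weight_vecB k u v : weight_vec k u -> weight_vec k v -> weight_vec k (u - v).
Proof. by move=> hu hv; rewrite -scaleN1r; apply/weight_vecD/weight_vecZ. Qed.

Lemma weight_seq_scale s (c : {poly C}) :
  weight_seq s -> weight_seq [seq (p.1, c *: p.2) | p <- s].
Proof. by move=> hs _ /mapP [p ps ->]; apply/weight_vecZ/hs. Qed.

Lemma weight_comp_weight s k : weight_seq s -> weight_vec k (weight_comp s k).
Proof.
move=> hs; rewrite /weight_vec /weight_comp linear_sum scaler_sumr.
by rewrite big_seq_cond [RHS]big_seq_cond; apply: eq_bigr => p /andP [ps /eqP <-]; apply: hs.
Qed.

Lemma weight_comp_notin s k : k \notin map fst s -> weight_comp s k = 0.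
Proof.
move=> kn; rewrite /weight_comp big_seq_cond big1 // => p /andP [ps /eqP pk].
by case/negP: kn; rewrite -pk map_f.
Qed.

Lemma weight_comp_mem s p : uniq (map fst s) -> p \in s -> weight_comp s p.1 = p.2.
Proof.
elim: s => [|q s IH] //= /andP [qn us]; rewrite in_cons /weight_comp big_cons.
case/orP => [/eqP ->|ps].
  rewrite eqxx big1_seq ?addr0 // => r /andP [/eqP rq rs].
  by case/negP: qn; rewrite -rq map_f.
have -> : (q.1 == p.1) = false by apply: contraNF qn => /eqP ->; rewrite map_f.
exact: IH.
Qed.

Lemma sum_weight_comp s r : uniq r -> {subset map fst s <= r} ->
  \sum_(k <- r) weight_comp s k = \sum_(p <- s) p.2.
Proof.
move=> ur sub; rewrite /weight_comp; under eq_bigr do rewrite big_mkcond.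
rewrite exchange_big /= big_seq [RHS]big_seq; apply: eq_bigr => p ps.
rewrite -big_mkcond (eq_bigl (pred1 p.1)) => [|k]; last by rewrite /= eq_sym.
by rewrite big_const_seq count_uniq_mem // sub ?map_f //= addr0.
Qed.

Lemma weight_comp_map s (g : int -> int) (F : {additive V -> V}) k :
  injective g -> weight_comp [seq (g p.1, F p.2) | p <- s] (g k) = F (weight_comp s k).
Proof.
move=> gi; rewrite /weight_comp big_map raddf_sum.
by apply: eq_bigl => p /=; rewrite inj_eq.
Qed.

Lemma weight_comp_scale s (c : {poly C}) k :
  weight_comp [seq (p.1, c *: p.2) | p <- s] k = c *: weight_comp s k.
Proof. by rewrite /weight_comp big_map scaler_sumr. Qed.

Lemma scale_int_eq0 (n : int) (x : V) : n != 0 -> (n%:~R : {poly C}) *: x = 0 -> x = 0.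
Proof.
move=> n0 /(congr1 (fun y => (n%:~R : C)^-1%:P *: y)).
by rewrite scaler0 scalerA -(rmorph_int (@polyC C)) -rmorphM mulVf ?intr_eq0 // scale1r.
Qed.

(* Apply [H - k] to kill the first summand, then induct. *)
Lemma sum_weight_seq_eq0 s : uniq (map fst s) -> weight_seq s ->
  \sum_(p <- s) p.2 = 0 -> forall p, p \in s -> p.2 = 0.
Proof.
have [n] := ubnP (size s); elim: n s => // n IHn [|[k v] s] //= szs /andP [kn us] hs.
rewrite big_cons /= => hsum.
pose s' := [seq (p.1, ((p.1 - k)%:~R : {poly C}) *: p.2) | p <- s].
have hs' : weight_seq s'.
  move=> _ /mapP [p ps ->]; apply/weight_vecZ/hs.
  by rewrite in_cons ps orbT.
have sum' : \sum_(p <- s') p.2 = 0.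
  have := congr1 (fun x => H x - (k%:~R : {poly C}) *: x) hsum.
  rewrite /= linear0 scaler0 subrr linearD linear_sum (hs (k, v)) ?mem_head //= scalerDr.
  rewrite opprD addrACA subrr add0r scaler_sumr -sumrB => h; rewrite big_map -[RHS]h.
  by apply: eq_big_seq => p ps; rewrite hs ?in_cons ?ps ?orbT // rmorphB scalerBl.
have all0 p : p \in s -> p.2 = 0.
  move=> ps; apply: (@scale_int_eq0 (p.1 - k)).
    by rewrite subr_eq0; apply: contraNneq kn => <-; rewrite map_f.
  have := IHn s' _ _ hs' sum' (p.1, ((p.1 - k)%:~R : {poly C}) *: p.2).
  by apply; rewrite ?size_map ?map_f // /s' -map_comp.
move=> p; rewrite in_cons => /orP [/eqP -> /=|]; last exact: all0.
by move: hsum; rewrite big1_seq ?addr0 // => q /andP [_ /all0].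
Qed.

Lemma eq_weight_comp s1 s2 : weight_seq s1 -> weight_seq s2 ->
  \sum_(p <- s1) p.2 = \sum_(p <- s2) p.2 -> weight_comp s1 =1 weight_comp s2.
Proof.
move=> h1 h2 e k; pose r := undup (map fst (s1 ++ s2)).
pose s3 := [seq (j, weight_comp s1 j - weight_comp s2 j) | j <- r].
have sub1 : {subset map fst s1 <= r} by move=> j js; rewrite mem_undup map_cat mem_cat js.
have sub2 : {subset map fst s2 <= r}.
  by move=> j js; rewrite mem_undup map_cat mem_cat js orbT.
have hs3 : weight_seq s3.
  by move=> _ /mapP [j _ ->]; apply: weight_vecB; apply: weight_comp_weight.
have sum3 : \sum_(p <- s3) p.2 = 0.
  by rewrite big_map sumrB !sum_weight_comp ?undup_uniq // e subrr.
case kr: (k \in r).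
  apply/eqP; rewrite -subr_eq0; apply/eqP.
  apply: (sum_weight_seq_eq0 _ hs3 sum3 (map_f (fun j => (j, _)) kr)).
  by rewrite -map_comp map_id undup_uniq.
by rewrite !weight_comp_notin // (contraFN (sub1 k), contraFN (sub2 k)).
Qed.

Lemma weight_comp_kernel (F : {linear V -> V}) d s : shifts_weights F d ->
  weight_seq s -> F (\sum_(p <- s) p.2) = 0 -> forall k, F (weight_comp s k) = 0.
Proof.
move=> hF hs Fs0 k; rewrite -(weight_comp_map s F k (addIr d)).
have hFs : weight_seq [seq (p.1 + d, F p.2) | p <- s].
  by move=> _ /mapP [p ps ->]; apply/hF/hs.
rewrite (eq_weight_comp (s2 := [::]) hFs) ?weight_comp_notin // ?big_nil.
by rewrite big_map -linear_sum.
Qed.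

Hypothesis decH : weight_decomposable.

Lemma weight_comp_divide s (P : {poly C}) y : weight_seq s ->
  \sum_(p <- s) p.2 = P *: y ->
  forall k, exists y', weight_vec k y' /\ weight_comp s k = P *: y'.
Proof.
move=> hs e k; have [sy [ys hsy]] := decH y; exists (weight_comp sy k).
split; first exact: weight_comp_weight.
rewrite -weight_comp_scale; apply: (eq_weight_comp hs (weight_seq_scale (c := P) hsy)).
by rewrite e ys big_map scaler_sumr.
Qed.

Lemma weight_comp_image (G : {linear V -> V}) d s b : shifts_weights G d ->
  weight_seq s -> \sum_(p <- s) p.2 = G b -> forall k, exists b', weight_comp s k = G b'.
Proof.
move=> hG hs sb k; have [s' [bs hs']] := decH b; exists (weight_comp s' (k - d)).
rewrite -(weight_comp_map s' G _ (addIr d)) subrK; apply: eq_weight_comp => //.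
  by move=> _ /mapP [p ps ->]; apply/hG/hs'.
by rewrite big_map -linear_sum -bs.
Qed.

End Weights.

Section LinearCombinations.
Variables (R : comNzRingType) (V : lmodType R).

Definition lincomb4 (w : V * V * V * V) (a b c d : R) : V :=
  a *: w.1.1.1 + b *: w.1.1.2 + c *: w.1.2 + d *: w.2.

Lemma lincomb4D w a b c d a' b' c' d' :
  lincomb4 w a b c d + lincomb4 w a' b' c' d' =
  lincomb4 w (a + a') (b + b') (c + c') (d + d').
Proof. by rewrite /lincomb4 !scalerDl addrACA [X in X + _]addrACA [X in X + _ + _]addrACA. Qed.

Lemma lincomb4Z w e a b c d :
  e *: lincomb4 w a b c d = lincomb4 w (e * a) (e * b) (e * c) (e * d).
Proof. by rewrite /lincomb4 !scalerDr !scalerA. Qed.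

Lemma lincomb4N w a b c d : - lincomb4 w a b c d = lincomb4 w (- a) (- b) (- c) (- d).
Proof. by rewrite /lincomb4 !opprD !scaleNr. Qed.

Lemma lincomb4Mn w a b c d n :
  lincomb4 w a b c d *+ n = lincomb4 w (a *+ n) (b *+ n) (c *+ n) (d *+ n).
Proof. by rewrite /lincomb4 !mulrnDl !scalerMnl. Qed.

Lemma lincomb40 w : 0 = lincomb4 w 0 0 0 0.
Proof. by rewrite /lincomb4 !scale0r !addr0. Qed.

Lemma lincomb4_1 w : w.1.1.1 = lincomb4 w 1 0 0 0.
Proof. by rewrite /lincomb4 !scale1r !scale0r !addr0. Qed.

Lemma lincomb4_2 w : w.1.1.2 = lincomb4 w 0 1 0 0.
Proof. by rewrite /lincomb4 !scale1r !scale0r add0r !addr0. Qed.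

Lemma lincomb4_3 w : w.1.2 = lincomb4 w 0 0 1 0.
Proof. by rewrite /lincomb4 !scale1r !scale0r !add0r addr0. Qed.

Lemma lincomb4_4 w : w.2 = lincomb4 w 0 0 0 1.
Proof. by rewrite /lincomb4 !scale1r !scale0r !add0r. Qed.

End LinearCombinations.

(* Proves an identity between R-linear combinations of the vectors [t1 .. t4]
   by reducing it to [ring] identities between their coefficients; the tuple
   is [pose]d so that rewriting the [ti] does not loop. *)
Ltac lincomb_ring t1 t2 t3 t4 :=
  let W := fresh "W" in let w1 := fresh "w" in let w2 := fresh "w" in
  let w3 := fresh "w" in let w4 := fresh "w" in
  set w1 := t1; set w2 := t2; set w3 := t3; set w4 := t4; clearbody w1 w2 w3 w4;
  pose W := (w1, w2, w3, w4);
  rewrite ?[w1](lincomb4_1 W) ?[w2](lincomb4_2 W) ?[w3](lincomb4_3 W) ?[w4](lincomb4_4 W)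
          ?(lincomb40 W) !(lincomb4D, lincomb4Z, lincomb4N, lincomb4Mn);
  congr (lincomb4 W _ _ _ _); ring.

Section CasimirLinear.
Variables (C : numFieldType) (V : lmodType {poly C}) (X Y H : {linear V -> V}).

Lemma Omega_d_is_linear : linear (Omega_d X Y H).
Proof.
move=> a u v; rewrite /Omega_d.
have -> : X (Y (a *: u + v)) + Y (X (a *: u + v)) =
          a *: (X (Y u) + Y (X u)) + (X (Y v) + Y (X v)).
  by rewrite !linearP addrACA scalerDr.
rewrite !(linearP H); lincomb_ring (H (H u)) (H (H v)) (X (Y u) + Y (X u)) (X (Y v) + Y (X v)).
Qed.

HB.instance Definition _ := GRing.isLinear.Build {poly C} V V *:%R (Omega_d X Y H)
  Omega_d_is_linear.

End CasimirLinear.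

Definition hc_scalar (C : numFieldType) (lam : {poly C}) : {poly C} :=
  (8^-1 : C)%:P * 'X^2 * (lam ^+ 2 - 1).

Lemma hc_scalar_inj (C : numFieldType) (lam lam0 : {poly C}) :
  hc_scalar lam = hc_scalar lam0 -> lam = lam0 \/ lam = - lam0.
Proof.
have nz : (8^-1 : C)%:P * 'X^2 != 0.
  by rewrite mulf_neq0 ?polyC_eq0 ?invr_eq0 ?pnatr_eq0 // expf_neq0 // polyX_eq0.
rewrite /hc_scalar => /(mulfI nz)/addIr/eqP; rewrite eqf_sqr.
by case/orP => /eqP ->; [left | right].
Qed.

Section GdKModule.
Variables (C : numFieldType) (V : lmodType {poly C}) (X Y H : {linear V -> V}).
Hypothesis gdK : gdK_module X Y H.

Lemma gdK_HX v : H (X v) = X v *+ 2 + X (H v).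
Proof. by case: gdK => /(_ v) /eqP; rewrite subr_eq => /eqP. Qed.

Lemma gdK_HY v : H (Y v) = - (Y v *+ 2) + Y (H v).
Proof. by case: gdK => _ /(_ v) /eqP; rewrite subr_eq => /eqP. Qed.

Lemma gdK_XY v : X (Y v) = 'X^2 *: H v + Y (X v).
Proof. by case: gdK => _ _ /(_ v) /eqP; rewrite subr_eq => /eqP. Qed.

Lemma gdK_weight_decomposable : weight_decomposable H.
Proof. by case: gdK. Qed.

Lemma shifts_weightsX : shifts_weights H X 2.
Proof.
move=> j x hx; rewrite /weight_vec gdK_HX hx linearZ_LR intrD scalerDl addrC.
by rewrite -scaler_nat.
Qed.

Lemma shifts_weightsY : shifts_weights H Y (-2).
Proof.
move=> j x hx; rewrite /weight_vec gdK_HY hx linearZ_LR intrD scalerDl addrC.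
by rewrite -scaler_nat -scaleNr rmorphN.
Qed.

Let q : {poly C} := (8^-1 : C)%:P.

Lemma inv4_poly : (4^-1 : C)%:P = 2%:R * q.
Proof.
rewrite /q -(rmorph_nat (@polyC C)) -rmorphM; congr _%:P.
by rewrite [8%:R]( _ : _ = 2%:R * 4%:R :> C) ?invfM ?mulrA ?divff ?mul1r ?pnatr_eq0 // -natrM.
Qed.

(* [XY = t^2 H + YX] puts [Omega_d] in normal order. *)
Lemma Omega_dE v :
  Omega_d X Y H v = (q * 'X^2) *: H (H v) + (4%:R * q) *: Y (X v) + (2%:R * q * 'X^2) *: H v.
Proof. by rewrite /Omega_d gdK_XY inv4_poly; lincomb_ring (H (H v)) (Y (X v)) (H v) v. Qed.

Ltac gdK_normalize :=
  rewrite ?(linearD X, linearD Y, linearD H, linearZ_LR X, linearZ_LR Y, linearZ_LR H,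
    raddfMn X, raddfMn Y, raddfMn H, linearN X, linearN Y, linearN H, gdK_HX, gdK_HY, gdK_XY).

Lemma Omega_dX v : Omega_d X Y H (X v) = X (Omega_d X Y H v).
Proof.
rewrite !Omega_dE; gdK_normalize.
by lincomb_ring (Y (X (X v))) (X (H (H v))) (X (H v)) (X v).
Qed.

Lemma Omega_dY v : Omega_d X Y H (Y v) = Y (Omega_d X Y H v).
Proof.
rewrite !Omega_dE; gdK_normalize.
by lincomb_ring (Y (Y (X v))) (Y (H (H v))) (Y (H v)) (Y v).
Qed.

Lemma Omega_dH v : Omega_d X Y H (H v) = H (Omega_d X Y H v).
Proof.
rewrite !Omega_dE; gdK_normalize.
by lincomb_ring (Y (X (H v))) (H (H (H v))) (H (H v)) (Y (X v)).
Qed.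

Lemma Omega_d_weight k v : weight_vec H k v -> weight_vec H k (Omega_d X Y H v).
Proof. by rewrite /weight_vec -Omega_dH => ->; rewrite linearZ. Qed.

Lemma Omega_d_highest k v : X v = 0 -> weight_vec H k v ->
  Omega_d X Y H v = hc_scalar (k + 1)%:~R *: v.
Proof.
move=> Xv hv; rewrite Omega_dE Xv linear0 scaler0 addr0 hv linearZ_LR hv !scalerA -scalerDl.
by congr (_ *: _); rewrite /hc_scalar /q; ring.
Qed.

Lemma Omega_d_lowest k v : Y v = 0 -> weight_vec H k v ->
  Omega_d X Y H v = hc_scalar (k - 1)%:~R *: v.
Proof.
move=> Yv hv; have YXv : Y (X v) = - ('X^2 * k%:~R) *: v.
  have := gdK_XY v; rewrite Yv linear0 hv scalerA => /eqP.
  by rewrite eq_sym addrC addr_eq0 => /eqP ->; rewrite scaleNr.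
rewrite Omega_dE YXv hv linearZ_LR hv !scalerA -!scalerDl.
by congr (_ *: _); rewrite /hc_scalar /q; ring.
Qed.

End GdKModule.

Section Spans.
Variables (C : numFieldType) (V : lmodType {poly C}).

Fixpoint in_span (s : seq V) (v : V) : Prop :=
  if s is x :: s' then exists c w, in_span s' w /\ v = c *: x + w else v = 0.

Lemma in_spanD s u v : in_span s u -> in_span s v -> in_span s (u + v).
Proof.
elim: s u v => [|x s IH] u v /=; first by move=> -> ->; rewrite addr0.
move=> [c [w [hw ->]]] [c' [w' [hw' ->]]]; exists (c + c'), (w + w').
by rewrite scalerDl addrACA; split; first exact: IH.
Qed.

Lemma in_spanZ s (p : {poly C}) v : in_span s v -> in_span s (p *: v).
Proof.
elim: s v => [|x s IH] v /=; first by move=> ->; rewrite scaler0.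
move=> [c [w [hw ->]]]; exists (p * c), (p *: w).
by rewrite scalerDr scalerA; split; first exact: IH.
Qed.

Lemma in_span_lincomb s (c : seq {poly C}) : in_span s (\sum_(i < size s) c`_i *: s`_i).
Proof.
elim: s c => [|x s IH] c /=; first by rewrite big_ord0.
rewrite big_ord_recl; exists c`_0, (\sum_(i < size s) c`_(bump 0 i) *: s`_i).
by split=> //; have := IH (behead c); congr in_span; apply: eq_bigr => i _; rewrite nth_behead.
Qed.

Lemma in_span_cons_coef s x c w P c' w' :
  (forall d, in_span s (d *: x) -> d = 0) -> in_span s w -> in_span s w' ->
  c *: x + w = P *: (c' *: x + w') -> c = P * c'.
Proof.
move=> xfree hw hw' e; apply/eqP; rewrite -subr_eq0; apply/eqP/xfree.
have -> : (c - P * c') *: x = P *: w' - w.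
  by rewrite scalerBl -scalerA -[c *: x](addrK w) e scalerDr addrAC (addrC (P *: _)) addrK.
by apply: in_spanD; [exact: in_spanZ | rewrite -scaleN1r; exact: in_spanZ].
Qed.

Hypothesis tfV : torsion_free V.

(* If [x] is torsion modulo [span s], multiply [e] into [span s]; otherwise
   every [P] with [e = P y] divides the coefficient of [x] in [e]. *)
Lemma span_divisor_bound s e : in_span s e -> e <> 0 ->
  exists N, forall (P : {poly C}) y, in_span s y -> e = P *: y -> (size P <= N)%N.
Proof.
elim: s e => [|x s IH] e /=; first by move=> ->.
move=> [c [w [hw ->]]] e0.
have [[d [d0 hd]]|xfree] := pselect (exists d : {poly C}, d != 0 /\ in_span s (d *: x)).
  have dcomb a u : in_span s u -> in_span s (d *: (a *: x + u)).
    by move=> hu; rewrite scalerDr scalerA mulrC -scalerA; apply: in_spanD; apply: in_spanZ.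
  have de0 : d *: (c *: x + w) <> 0 by case/tfV => // d0'; move: d0; rewrite d0' eqxx.
  have [N HN] := IH _ (dcomb c w hw) de0.
  exists N => P _ [c' [w' [hw' ->]]] ey; apply: (HN _ _ (dcomb c' w' hw')).
  by rewrite ey !scalerA mulrC.
have {}xfree d : in_span s (d *: x) -> d = 0.
  by move=> hd; apply: contrapT => /eqP d0; apply: xfree; exists d.
have [c0|c0] := eqVneq c 0.
  subst c; have w0 : w <> 0 by rewrite scale0r add0r in e0.
  have [N HN] := IH w hw w0; exists N => P _ [c' [w' [hw' ->]]] ey.
  have /esym/eqP := in_span_cons_coef xfree hw hw' ey.
  rewrite mulf_eq0 => /orP [/eqP P0|/eqP c'0]; first by case: e0; rewrite ey P0 scale0r.
  by apply: (HN _ w') => //; move: ey; rewrite c'0 !scale0r !add0r.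
exists (size c) => P _ [c' [w' [hw' ->]]] ey.
have cP := in_span_cons_coef xfree hw hw' ey.
have c'0 : c' != 0 by apply: contraNneq c0 => c'0; rewrite cP c'0 mulr0.
have P0 : P != 0 by apply: contraNneq c0 => P0; rewrite cP P0 mul0r.
by rewrite cP size_mul // -(@prednK (size c')) ?size_poly_gt0 // addnS leq_addr.
Qed.

End Spans.

Section WeightDivisors.
Variables (C : numFieldType) (V : lmodType {poly C}) (H : {linear V -> V}).
Hypothesis decH : weight_decomposable H.

Lemma weight_vec_divide n u (P : {poly C}) y : weight_vec H n u -> u = P *: y ->
  exists y', weight_vec H n y' /\ u = P *: y'.
Proof.
move=> hu uy; have hs : weight_seq H [:: (n, u)] by move=> p; rewrite inE => /eqP ->.
have sy : \sum_(p <- [:: (n, u)]) p.2 = P *: y by rewrite big_seq1.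
have [y' [hy' e]] := weight_comp_divide decH hs sy n.
by exists y'; rewrite -e (weight_comp_mem (p := (n, u))) ?mem_head.
Qed.

(* As [P.[z] != 0], the divisions by [t - z] and by [P] combine. *)
Lemma weight_vec_prod_XsubC n e (zs : seq C) : weight_vec H n e -> uniq zs ->
  (forall z, z \in zs -> tzV z e) ->
  exists y, weight_vec H n y /\ e = (\prod_(z <- zs) ('X - z%:P)) *: y.
Proof.
move=> he; elim: zs => [|z zs IH] /=; first by exists e; rewrite big_nil scale1r.
move=> /andP [zn uzs] hz; rewrite big_cons.
have [y [hy ey]] := IH uzs (fun z' h => hz z' (mem_behead (s := z :: zs) h)).
have [y1 ey1] := hz z (mem_head _ _); have [y1' [hy1 {}ey1]] := weight_vec_divide he ey1.
set P := \prod_(z0 <- zs) ('X - z0%:P) in ey *.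
have Pz : P.[z] != 0.
  rewrite /P horner_prod prodf_seq_neq0; apply/allP => z0 z0zs /=.
  by rewrite hornerXsubC subr_eq0; apply: contraNneq zn => ->.
have /factor_theorem [Q hQ] : root (P - P.[z]%:P) z by rewrite rootE !hornerE subrr.
exists (P.[z]^-1%:P *: (y1' - Q *: y)); split.
  by apply: weight_vecZ; apply: weight_vecB => //; apply: weight_vecZ.
have -> : (('X - z%:P) * P) *: (P.[z]^-1%:P *: (y1' - Q *: y)) =
    P.[z]^-1%:P *: (P *: (('X - z%:P) *: y1') - (Q * ('X - z%:P)) *: (P *: y)).
  by lincomb_ring y1' y y y.
rewrite -ey1 -ey -hQ scalerBl opprB addrC subrK scalerA -rmorphM mulVf //.
by rewrite scale1r.
Qed.

Lemma weight_vec_tzV_bound n e :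
  torsion_free V -> admissible H -> weight_vec H n e -> e <> 0 ->
  exists N, forall zs : seq C, uniq zs -> (forall z, z \in zs -> tzV z e) -> (size zs <= N)%N.
Proof.
move=> tfV adm he e0; have [s [hs spans]] := adm n.
have es : in_span s e by have [c ->] := spans e he; apply: in_span_lincomb.
have [N HN] := span_divisor_bound tfV es e0.
exists N => zs uzs hz; have [y [hy ey]] := weight_vec_prod_XsubC he uzs hz.
have ys : in_span s y by have [c ->] := spans y hy; apply: in_span_lincomb.
by have := HN _ _ ys ey; rewrite size_prod_XsubC => /ltnW.
Qed.

End WeightDivisors.

Definition uncountable (T : Type) := forall f : nat -> T, exists z, forall n, f n <> z.

(* Enumerate [zs] first and then [f], and avoid the enumeration. *)
Lemma uncountable_seq (T : eqType) (f : nat -> T) M : uncountable T ->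
  exists zs : seq T, [/\ uniq zs, size zs = M & forall z, z \in zs -> forall n, f n <> z].
Proof.
move=> Tunc; elim: M => [|M [zs [uzs szs nf]]]; first by exists [::].
pose g n := if (n < size zs)%N then nth (f 0%N) zs n else f (n - size zs)%N.
have [r hr] := Tunc g; exists (r :: zs); split; rewrite /= ?szs //.
  rewrite uzs andbT; apply/negP => rzs; apply: (hr (index r zs)).
  by rewrite /g index_mem rzs nth_index.
move=> z; rewrite in_cons => /orP [/eqP -> n fn|]; last exact: nf.
by apply: (hr (n + size zs)%N); rewrite /g ltnNge leq_addl addnK.
Qed.

Section TzV.
Variables (C : numFieldType) (V : lmodType {poly C}) (z : C).

Lemma tzV0 : tzV z (0 : V).
Proof. by exists 0; rewrite scaler0. Qed.

Lemma tzVD (u v : V) : tzV z u -> tzV z v -> tzV z (u + v).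
Proof. by move=> [a ->] [b ->]; exists (a + b); rewrite scalerDr. Qed.

Lemma tzVZ (p : {poly C}) (v : V) : tzV z v -> tzV z (p *: v).
Proof. by move=> [a ->]; exists (p *: a); rewrite !scalerA mulrC. Qed.

Lemma tzVB (u v : V) : tzV z u -> tzV z v -> tzV z (u - v).
Proof. by move=> hu hv; rewrite -scaleN1r; apply/tzVD/tzVZ. Qed.

Lemma tzV_linear (G : {linear V -> V}) v : tzV z v -> tzV z (G v).
Proof. by move=> [a ->]; exists (G a); rewrite linearZ. Qed.

End TzV.

Section Fibers.
Variables (C : numFieldType) (V : lmodType {poly C}) (X Y H : {linear V -> V}).
Hypothesis gdK : gdK_module X Y H.

(* [F^-1((t - z)V)] is a (g,K)-submodule containing [(t - z)V]. *)
Lemma fiber_irreducible_preimage z (F : {linear V -> V}) :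
  fiber_irreducible X Y H z -> (forall v, F (X v) = X (F v)) ->
  (forall v, F (Y v) = Y (F v)) -> (forall v, F (H v) = H (F v)) ->
  (forall v, tzV z (F v) -> tzV z v) \/ (forall v, tzV z (F v)).
Proof.
move=> [_ irr] FX FY FH; apply: (irr (fun x => tzV z (F x))).
- by rewrite linear0; apply: tzV0.
- by move=> u v hu hv; rewrite linearD; apply: tzVD.
- by move=> p v hv; rewrite linearZ; apply: tzVZ.
- by move=> v hv; apply: tzV_linear.
- by move=> v hv; rewrite FX FY FH; split; apply: tzV_linear.
move=> s us hs [a ea] q qs.
have hFs : weight_seq H [seq (p.1, F p.2) | p <- s].
  by move=> _ /mapP [p ps ->]; rewrite /= -FH hs // linearZ.
have sF : \sum_(p <- [seq (p.1, F p.2) | p <- s]) p.2 = ('X - z%:P) *: a.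
  by rewrite big_map -linear_sum.
have [y [_ ey]] := weight_comp_divide (gdK_weight_decomposable gdK) hFs sF q.1.
exists y; rewrite -ey (weight_comp_map s F q.1 (@inj_id _)).
by rewrite (weight_comp_mem (p := q)).
Qed.

Lemma casimir_fiber_dichotomy z (p : {poly C}) u v :
  fiber_irreducible X Y H z -> Omega_d X Y H u = p *: u ->
  tzV z u \/ tzV z (Omega_d X Y H v - p *: v).
Proof.
move=> irr Ou; pose F : {linear V -> V} := Omega_d X Y H \- p.[z]%:P \*: idfun.
have /factor_theorem [Q hQ] : root (p - p.[z]%:P) z by rewrite rootE !hornerE subrr.
have tzV_pz w : tzV z ((p - p.[z]%:P) *: w).
  by rewrite hQ -scalerA; apply: tzVZ; exists w.
have FE w : F w = Omega_d X Y H w - p.[z]%:P *: w by [].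
have FX w : F (X w) = X (F w) by rewrite !FE (Omega_dX gdK) linearB (linearZ_LR X).
have FY w : F (Y w) = Y (F w) by rewrite !FE (Omega_dY gdK) linearB (linearZ_LR Y).
have FH w : F (H w) = H (F w) by rewrite !FE (Omega_dH gdK) linearB (linearZ_LR H).
have [uF|allF] := fiber_irreducible_preimage irr FX FY FH.
  by left; apply: uF; rewrite FE Ou -scalerBl.
right; have -> : Omega_d X Y H v - p *: v = F v - (p - p.[z]%:P) *: v.
  by rewrite FE scalerBl opprB addrA subrK.
exact: tzVB.
Qed.

End Fibers.

Section CasimirScalar.
Variables (C : numFieldType) (V : lmodType {poly C}) (X Y H : {linear V -> V}).
Hypotheses (gdK : gdK_module X Y H) (tfV : torsion_free V) (adm : admissible H).
Hypotheses (gi : generically_irreducible X Y H) (Cunc : uncountable C).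

(* A nonzero weight vector lies in only finitely many [(t - z)V], so a fiber
   where both [u] and [Omega_d w - p w] survive is irreducible. *)
Lemma casimir_weight_vec_eigen n u (p : {poly C}) m w :
  weight_vec H n u -> u <> 0 -> Omega_d X Y H u = p *: u ->
  weight_vec H m w -> Omega_d X Y H w = p *: w.
Proof.
move=> hu u0 Ou hw; apply: contrapT => /eqP; rewrite -subr_eq0 => /eqP e0.
have decH := gdK_weight_decomposable gdK.
have he : weight_vec H m (Omega_d X Y H w - p *: w).
  by apply: weight_vecB; [apply: Omega_d_weight | apply: weight_vecZ].
have [N1 HN1] := weight_vec_tzV_bound decH tfV adm hu u0.
have [N2 HN2] := weight_vec_tzV_bound decH tfV adm he e0.
have [f hf] := gi; have [zs [uzs szs nf]] := uncountable_seq f (N1 + N2).+1 Cunc.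
pose a z := `[< tzV z u >].
have h1 : (size [seq z <- zs | a z] <= N1)%N.
  by apply: HN1 => [|z]; rewrite ?filter_uniq // mem_filter => /andP [/asboolP].
have h2 : (size [seq z <- zs | predC a z] <= N2)%N.
  apply: HN2 => [|z]; rewrite ?filter_uniq // mem_filter => /andP [/asboolPn zu zzs].
  have irr : fiber_irreducible X Y H z.
    by apply: contrapT => /hf [k fk]; apply: (nf z zzs k).
  by case: (casimir_fiber_dichotomy gdK w irr Ou).
by have := leq_add h1 h2; rewrite !size_filter count_predC szs ltnn.
Qed.

Lemma casimir_scalar n u (p : {poly C}) : weight_vec H n u -> u <> 0 ->
  Omega_d X Y H u = p *: u -> forall v, Omega_d X Y H v = p *: v.
Proof.
move=> hu u0 Ou v; have [s [-> hs]] := gdK_weight_decomposable gdK v.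
rewrite linear_sum scaler_sumr; apply: eq_big_seq => q qs.
exact: (casimir_weight_vec_eigen hu u0 Ou (hs q qs)).
Qed.

Lemma infchar_of_weight_vec k w (lam0 : {poly C}) : weight_vec H k w -> w <> 0 ->
  Omega_d X Y H w = hc_scalar lam0 *: w ->
  has_infchar X Y H lam0 /\ forall lam, has_infchar X Y H lam -> lam = lam0 \/ lam = - lam0.
Proof.
move=> hw w0 Ow; split; first exact: (casimir_scalar hw w0 Ow).
move=> lam /(_ w); rewrite Ow => /eqP; rewrite -subr_eq0 -scalerBl => /eqP /tfV [/eqP|//].
by rewrite subr_eq0 => /eqP /esym /hc_scalar_inj.
Qed.

End CasimirScalar.

Section Dirac.
Variables (C : numFieldType) (V : lmodType {poly C}) (X Y H : {linear V -> V}).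
Hypothesis gdK : gdK_module X Y H.

Definition in_image (G : V -> V) (v : V) := exists b, v = G b.

Lemma in_image_neq0 (G : {linear V -> V}) v : ~ in_image G v -> v <> 0.
Proof. by move=> nv v0; apply: nv; exists 0; rewrite v0 linear0. Qed.

Lemma in_image_sum (G : {linear V -> V}) (r : seq int) (F : int -> V) :
  (forall k, k \in r -> in_image G (F k)) -> in_image G (\sum_(k <- r) F k).
Proof.
move=> h; rewrite big_seq; apply: big_ind => //; first by exists 0; rewrite linear0.
by move=> _ _ [a ->] [b ->]; exists (a + b); rewrite linearD.
Qed.

Lemma in_ker_DP a : in_ker_D X Y a <-> Y a.2 = 0 /\ X a.1 = 0.
Proof.
rewrite /in_ker_D /Dirac.
split=> [/pair_equal_spec [-> /= e2] | [-> ->]]; last by rewrite scaler0.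
split=> //; have := congr1 (fun x => 4%:R *: x) e2.
by rewrite /= scaler0 scalerA -(rmorph_nat (@polyC C)) -rmorphM mulfV ?pnatr_eq0 // scale1r.
Qed.

Lemma in_im_DP a : in_im_D X Y a <-> in_image Y a.1 /\ in_image X a.2.
Proof.
split=> [[b ->] /=|[[y ey] [x ex]]].
  by split; [exists b.2 | exists (4^-1%:P *: b.1); rewrite linearZ_LR].
exists (4%:R *: x, y); rewrite /Dirac /= linearZ_LR scalerA -(rmorph_nat (@polyC C)) -rmorphM.
by rewrite mulVf ?pnatr_eq0 // scale1r -ey -ex; case: a {ey ex}.
Qed.

Lemma weight_comp_outside_image (F G : {linear V -> V}) (dF dG : int) v :
  shifts_weights H F dF -> shifts_weights H G dG -> F v = 0 -> ~ in_image G v ->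
  exists k w, [/\ weight_vec H k w, F w = 0, ~ in_image G w &
    forall c : C, in_image G (H v - c%:P *: v) -> k%:~R = c].
Proof.
move=> hF hG Fv nv; have decH := gdK_weight_decomposable gdK.
have [s [vs hs]] := decH v; pose r := undup (map fst s).
have [k /not_implyP [kr nk]] : exists k, ~ (k \in r -> in_image G (weight_comp s k)).
  apply/existsNP => all; apply: nv; rewrite vs -(sum_weight_comp (r := r)) ?undup_uniq //.
    exact: in_image_sum.
  by move=> j; rewrite mem_undup.
exists k, (weight_comp s k); split => //; first exact: weight_comp_weight.
  by apply: (weight_comp_kernel hF hs); rewrite -vs.
move=> c [b eb]; apply/eqP; rewrite -subr_eq0; apply/eqP; apply: contrapT => kc; apply: nk.
pose s' := [seq (p.1, ((p.1%:~R - c)%:P : {poly C}) *: p.2) | p <- s].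
have hs' : weight_seq H s' by move=> _ /mapP [p ps ->]; apply/weight_vecZ/hs.
have sum' : \sum_(p <- s') p.2 = G b.
  rewrite -eb vs linear_sum scaler_sumr -sumrB big_map; apply: eq_big_seq => p ps.
  by rewrite /= hs // rmorphB /= rmorph_int scalerBl.
have [b' eb'] := weight_comp_image decH hG hs' sum' k.
have comp' : weight_comp s' k = (k%:~R - c)%:P *: weight_comp s k.
  by rewrite /weight_comp big_map scaler_sumr; apply: eq_bigr => p /= /eqP ->.
exists ((k%:~R - c)^-1%:P *: b'); rewrite linearZ_LR -eb' comp' scalerA -rmorphM.
by rewrite mulVf ?scale1r //; apply/eqP.
Qed.

Lemma Dirac_extremal_vector a : in_ker_D X Y a -> ~ in_im_D X Y a ->
  exists k w (lam0 : {poly C}), [/\ weight_vec H k w, w <> 0,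
    Omega_d X Y H w = hc_scalar lam0 *: w &
    forall mu : C, in_im_D X Y (Hspin H a - mu%:P *: a) -> lam0 = mu%:P].
Proof.
move=> /in_ker_DP [Ya2 Xa1] nia; have [iy|niy] := pselect (in_image Y a.1).
  have nix : ~ in_image X a.2 by move=> ix; apply: nia; apply/in_im_DP.
  have [k [w [hw Yw nw kE]]] :=
    weight_comp_outside_image (shifts_weightsY gdK) (shifts_weightsX gdK) Ya2 nix.
  exists k, w, (k - 1)%:~R; split; [done | exact: in_image_neq0 nw | exact: Omega_d_lowest |].
  move=> mu /in_im_DP [_ ix]; rewrite -(rmorph_int (@polyC C)) intrB (kE (mu + 1)) ?addrK //.
  by move: ix; congr in_image; rewrite /= rmorphD scalerDl scale1r opprD addrA addrAC.
have [k [w [hw Xw nw kE]]] :=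
  weight_comp_outside_image (shifts_weightsX gdK) (shifts_weightsY gdK) Xa1 niy.
exists k, w, (k + 1)%:~R; split; [done | exact: in_image_neq0 nw | exact: Omega_d_highest |].
move=> mu /in_im_DP [iy _]; rewrite -(rmorph_int (@polyC C)) intrD (kE (mu - 1)) ?subrK //.
by move: iy; congr in_image; rewrite /= rmorphB scalerBl scale1r opprB addrA.
Qed.

End Dirac.

(* A countable set of reals is Lebesgue-null, but [[0, 1]] is not. *)
Lemma real_uncountable (R : realType) : uncountable R.
Proof.
move=> h; apply: contrapT => /forallNP hsurj.
have range_h : range h = [set: R].
  apply/seteqP; split => // r _.
  by move/existsNP: (hsurj r) => [n /contrapT hn]; exists n.
have : lebesgue_measure (range h) = 0%E.
  apply/countable_lebesgue_measure0/(sub_countable (card_image_le h setT)).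
  exact: countableP.
rewrite range_h => null.
have : (lebesgue_measure (`[0%R, 1%R] : set R) <= lebesgue_measure [set: R])%E.
  by apply: le_measure; rewrite ?inE.
by rewrite null lebesgue_measure_itv /= lte_fin ltr01 /= oppr0 adde0 lee_fin ler10.
Qed.

Lemma complex_uncountable (R : realType) : uncountable R[i].
Proof.
move=> f; have [r hr] := real_uncountable (fun n => complex.Re (f n)).
by exists (Complex r 0) => n fn; apply: (hr n); rewrite fn.
Qed.

Unset Implicit Arguments.
Set Strict Implicit.

Theorem mainTheorem16 (R : realType) (V : lmodType {poly R[i]})
  (X Y H : {linear V -> V}) :
  gdK_module X Y H -> torsion_free V -> admissible H ->
  generically_irreducible X Y H ->
  HD_nonzero X Y ->
  (exists lam : {poly R[i]}, has_infchar X Y H lam) /\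
  (forall mu : R[i], HD_weight_nonzero X Y H mu ->
     has_infchar X Y H mu%:P /\
     (forall lam : {poly R[i]}, has_infchar X Y H lam ->
        (* lam = 1 (x) w.mu with w in W(g,k) = {1, w0}, w0 = -1 on k^* *)
        exists w : bool, lam = (if w then - mu else mu)%:P)).
Proof.
move=> gdK tfV adm gi [a [ka nia]].
have infchar := infchar_of_weight_vec gdK tfV adm gi (@complex_uncountable R).
split.
  have [k [w [lam0 [hw w0 Ow _]]]] := Dirac_extremal_vector gdK ka nia.
  by exists lam0; case: (infchar _ _ _ hw w0 Ow).
move=> mu [b [kb _ imb nib]].
have [k [w [lam0 [hw w0 Ow lam0E]]]] := Dirac_extremal_vector gdK kb nib.
rewrite (lam0E mu imb) in Ow.
have [hmu lamE] := infchar _ _ _ hw w0 Ow.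
split=> // lam /lamE [->|->]; first by exists false.
by exists true; rewrite rmorphN.
Qed.
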